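(* Let $L\subseteq\mathbb{T}^{\mathcal{J}}$ be a tropical linear space with associated tropical Plücker vector $p$, whose finite coordinates are indexed by $n$-element subsets of $\mathcal{J}$ (so $L=L_p$). Then the following are equivalent: (1) $L$ is an $n$-dimensional isotropical linear space; (2) $L^\top=L^r$; (3) $p_{\mathcal{J}\setminus T}=p_{T^*}$ for all $T\subseteq\mathcal{J}$ of size $n$.
   Context: $\mathbb{T}=\mathbb{R}\cup\{\infty\}$. Let $\mathcal{J}=\{1,\dots,n,1^*,\dots,n^*\}$ with involution $i\leftrightarrow i^*$, $i^{**}=i$, and $T^*=\{t^*:t\in T\}$. For a finite set $E$, a tropical Plücker vector of rank $r$ is $p\in\mathbb{T}^{\mathcal{P}(E)}$ with nonempty support $\{S:p_S\ne\infty\}$, all support sets of size $r$, such that for all $S,T\subseteq E$ with $|S|=r-1$, $|T|=r+1$, the minimum $\min_{i\in T\setminus S}(p_{S\cup\{i\}}+p_{T\setminus\{i\}})$ is attained at least twice or equals $\infty$. For $T\subseteq E$, $|T|=r+1$, let $(d_T)_i=p_{T\setminus\{i\}}$ if $i\in T$, $\infty$ otherwise; Plücker circuits are $d_T+\lambda\mathbf{1}$ ($\lambda\in\mathbb{R}$) with nonempty support. $x,y\in\mathbb{T}^E$ are tropically orthogonal if $\min_k(x_k+y_k)$ is attained at least twice or equals $\infty$; $X^\top$ is the set of vectors tropically orthogonal to all of $X$. The tropical linear space of $p$ is $L_p=\{$Plücker circuits of $p\}^\top$; a tropical linear space is a set of this form, $p$ is its associated tropical Plücker vector, and its dimension is $r$.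 The reflection of $v\in\mathbb{T}^{\mathcal{J}}$ is $v^r$ with $v^r_i=v_{i^*}$, and $L^r=\{x^r:x\in L\}$. An $n$-dimensional tropical linear space $L\subseteq\mathbb{T}^{\mathcal{J}}$ is isotropical if for all $x,y\in L$ the minimum $\min(x_1+y_{1^*},\dots,x_n+y_{n^*},x_{1^*}+y_1,\dots,x_{n^*}+y_n)$ is attained at least twice or equals $\infty$. *)

From HB Require Import structures.
From mathcomp Require Import all_boot all_order all_algebra.
From mathcomp Require Import reals.
Set Implicit Arguments. Unset Strict Implicit. Unset Printing Implicit Defensive.
Import Order.TTheory GRing.Theory Num.Theory.
Local Open Scope ring_scope.

Section Tropical.
Variable R : realType.

(* Tropical numbers T = R ∪ {∞}: [Some a] is the real a, [None] is ∞. *)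
Definition trop := option R.

Definition tplus (x y : trop) : trop :=
  match x, y with Some a, Some b => Some (a + b) | _, _ => None end.

Definition tle (x y : trop) : Prop :=
  match x, y with
  | _, None => True
  | None, Some _ => False
  | Some a, Some b => (a <= b)%R
  end.

Definition min_twice (I : finType) (A : {set I}) (v : I -> trop) : Prop :=
  (forall i, i \in A -> v i = None) \/
  exists i j (a : R), [/\ i \in A, j \in A, i != j, v i = Some a & v j = Some a] /\
                       forall k, k \in A -> tle (Some a) (v k).

Variable E : finType.

Definition plucker (r : nat) (p : {set E} -> trop) : Prop :=
  [/\ exists S, p S <> None,
      forall S, p S <> None -> #|S| = r
    & forall S T : {set E}, #|S| = r.-1 -> #|T| = r.+1 ->
        min_twice (T :\: S) (fun i => tplus (p (i |: S)) (p (T :\ i)))].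
(* Note: the exchange condition is only imposed for |S| = r-1, which only
   makes sense for r >= 1; nonempty support forces the support sizes. *)

Definition dvec (p : {set E} -> trop) (T : {set E}) : E -> trop :=
  fun i => if i \in T then p (T :\ i) else None.

Definition plucker_circuit (r : nat) (p : {set E} -> trop) (c : E -> trop) : Prop :=
  exists T : {set E}, #|T| = r.+1 /\
  exists lam : R, (forall i, c i = tplus (dvec p T i) (Some lam)) /\
                  exists i, c i <> None.

Definition torth (x y : E -> trop) : Prop :=
  min_twice [set: E] (fun k => tplus (x k) (y k)).

Definition tperp (X : (E -> trop) -> Prop) : (E -> trop) -> Prop :=
  fun y => forall x, X x -> torth x y.

Definition tls_of (r : nat) (p : {set E} -> trop) : (E -> trop) -> Prop :=
  tperp (plucker_circuit r p).

Definition seteq (X Y : (E -> trop) -> Prop) : Prop := forall x, X x <-> Y x.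

Definition tls_dim (L : (E -> trop) -> Prop) (r : nat) : Prop :=
  exists p, plucker r p /\ seteq L (tls_of r p).

End Tropical.

(* The index set J = {1..n, 1*..n*}: inl i = i, inr i = i*. *)
Definition J (n : nat) : finType := ('I_n + 'I_n)%type.

Definition jstar (n : nat) (j : J n) : J n :=
  match j with inl i => inr i | inr i => inl i end.

Definition setstar (n : nat) (T : {set J n}) : {set J n} := (@jstar n) @: T.

Definition reflect_vec (R : realType) (n : nat) (v : J n -> trop R) : J n -> trop R :=
  fun i => v (@jstar n i).

Definition reflect_set (R : realType) (n : nat) (L : (J n -> trop R) -> Prop)
  : (J n -> trop R) -> Prop :=
  fun y => exists x, L x /\ y = reflect_vec x.

Definition isotropical (R : realType) (n : nat) (L : (J n -> trop R) -> Prop) : Prop :=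
  tls_dim L n /\
  forall x y, L x -> L y ->
    min_twice [set: J n] (fun k => tplus (x k) (y (@jstar n k))).

From HB Require Import structures.
From mathcomp Require Import all_boot all_order all_algebra reals.
From mathcomp Require Import zify lra.
From Stdlib Require Import Classical FunctionalExtensionality.
Set Implicit Arguments. Unset Strict Implicit. Unset Printing Implicit Defensive.
Import Order.TTheory GRing.Theory Num.Theory.
Local Open Scope ring_scope.

(* Write d_T for the circuits and c_S := (p_{S u i})_i for the cocircuits of p.
   Cocircuits lie in L_p, and conversely every vector of L_p is tropically
   orthogonal to every vector orthogonal to all cocircuits.  Reflection
   turns the cocircuit c_S into the circuit d_{J \ S*} of the vector
   q U := p_{J \ U*}; condition (3) says q = p, so reflection swaps circuits and
   cocircuits of p, and (3) => (2) follows; (2) => (1) is immediate.  If L is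
   isotropical, the cocircuits of p are orthogonal to the circuits of q; basis
   exchange then forces q = p + l, and q being an involutive image of p gives
   l = 0, i.e. (3). *)

Section MinTwice.
Variables (R : realType) (I : finType).
Implicit Types (A : {set I}) (v : I -> trop R).

Definition min_shared A v : Prop :=
  forall k c, k \in A -> v k = Some c ->
    exists j b, [/\ j \in A, j != k, v j = Some b & b <= c].

Lemma min_twiceP A v : min_twice A v <-> min_shared A v.
Proof.
split.
  case=> [vA | [i [j [a [[iA jA ij vi vj] a_min]]]]] k c kA vk.
    by rewrite vA in vk.
  have := a_min k kA; rewrite vk /= => ac.
  have [<-|ik] := eqVneq i k; last by exists i, a.
  by exists j, a; split; rewrite // eq_sym.
move=> shared.
have [/existsP [k0 /andP [k0A vk0]] | none] := boolP [exists k in A, v k != None].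
  pose P := [pred i | (i \in A) && (v i != None)].
  have Pk0 : P k0 by rewrite inE k0A.
  case: (arg_minP (fun i => odflt 0 (v i)) Pk0) => i /andP [iA] + i_min.
  case vi : (v i) => [c|] // _.
  have [j [b [jA ji vj bc]]] := shared i c iA vi.
  have cb : c <= b by have := i_min j; rewrite inE jA vj vi; apply.
  right; exists i, j, c; split.
    by rewrite vj (@le_anti _ _ b c) ?bc ?cb // eq_sym.
  move=> k kA; case vk : (v k) => [d|] //=.
  by have := i_min k; rewrite inE kA vk vi; apply.
left=> k kA; move: none; rewrite negb_exists => /forallP /(_ k).
by rewrite kA /=; case: (v k).
Qed.

Lemma min_twice_setT A v :
  (forall k, k \notin A -> v k = None) -> min_twice A v <-> min_twice [set: I] v.
Proof.
move=> vA; rewrite !min_twiceP; split=> shared k c kA vk.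
  have kA' : k \in A by apply: contraT => /vA; rewrite vk.
  have [j [b [_ jk vj bc]]] := shared k c kA' vk.
  by exists j, b; rewrite in_setT.
have [j [b [_ jk vj bc]]] := shared k c (in_setT k) vk.
by exists j, b; split=> //; apply: contraT => /vA; rewrite vj.
Qed.

End MinTwice.

Lemma tplus_eq_Some (R : realType) (u v : trop R) c :
  tplus u v = Some c -> exists a b, [/\ u = Some a, v = Some b & c = a + b].
Proof. by case: u => [a|] //; case: v => [b|] // [<-]; exists a, b. Qed.

Lemma tplus0 (R : realType) (u : trop R) : tplus u (Some 0) = u.
Proof. by case: u => //= a; rewrite addr0. Qed.

Section TropicalOrthogonality.
Variables (R : realType) (E : finType).
Implicit Types (x y : E -> trop R).

Lemma torthP x y :
  torth x y <-> forall k a b, x k = Some a -> y k = Some b ->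
    exists j a' b', [/\ j != k, x j = Some a', y j = Some b' & a' + b' <= a + b].
Proof.
rewrite /torth min_twiceP; split=> orth.
  move=> k a b xk yk.
  have := orth k (a + b) (in_setT k); rewrite xk yk.
  case=> // j [c [_ jk /tplus_eq_Some [a' [b' [xj yj ->]]] le_c]].
  by exists j, a', b'.
move=> k _ _ /tplus_eq_Some [a [b [xk yk ->]]].
have [j [a' [b' [jk xj yj le_ab]]]] := orth k a b xk yk.
by exists j, (a' + b'); rewrite in_setT xj yj.
Qed.

Lemma torthC x y : torth x y -> torth y x.
Proof.
move=> /torthP orth; apply/torthP => k a b yk xk.
have [j [b' [a' [jk xj yj le_ab]]]] := orth k b a xk yk.
by exists j, a', b'; rewrite addrC [a + b]addrC.
Qed.

Lemma torth_shift x y l : torth (fun k => tplus (x k) (Some l)) y <-> torth x y.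
Proof.
have shift x' l' : torth x' y -> torth (fun k => tplus (x' k) (Some l')) y.
  move=> /torthP orth; apply/torthP => k _ b /tplus_eq_Some [a [_ [xk [<-] ->]]] yk.
  have [j [a' [b' [jk xj yj le_ab]]]] := orth k a b xk yk.
  by exists j, (a' + l'), b'; rewrite xj; split=> //; lra.
split; last exact: shift.
move=> /(shift _ (- l)); congr torth; apply: functional_extensionality => k.
by case: (x k) => //= a; rewrite addrK.
Qed.

Lemma torth_perm (f : E -> E) x y :
  involutive f -> torth x y -> torth (x \o f) (y \o f).
Proof.
move=> fK /torthP orth; apply/torthP => k a b xk yk.
have [j [a' [b' [jk xj yj le_ab]]]] := orth (f k) a b xk yk.
by exists (f j), a', b'; rewrite /= !fK; split=> //; rewrite (inv_eq fK).
Qed.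

Lemma torth_card0 x y : #|E| = 0%N -> torth x y.
Proof. by move=> E0; apply/torthP => k; have /card0_eq := E0; move/(_ k). Qed.

Lemma torth_pair x y i j c :
  torth x y -> i != j ->
  (forall k, k != i -> k != j -> tplus (x k) (y k) = None) ->
  tplus (x i) (y i) = Some c -> tplus (x j) (y j) = Some c.
Proof.
rewrite /torth min_twiceP => orth ij off ci.
have [k [d [_ ki ck dc]]] := orth i c (in_setT i) ci.
have /eqP kj : k == j by apply: contraT => kj; rewrite off in ck.
subst k; have [k [e [_ kj ck' ed]]] := orth j d (in_setT j) ck.
have /eqP ki' : k == i by apply: contraT => ki'; rewrite off in ck'.
subst k; move: ck'; rewrite ci => -[ce].
by rewrite ck (@le_anti _ _ d c) // dc ce ed.
Qed.

End TropicalOrthogonality.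

Section SetExchange.
Variable E : finType.
Implicit Types (A B Z : {set E}) (i j k : E).

Lemma setU1D1 B k j : k != j -> k |: (B :\ j) = (k |: B) :\ j.
Proof.
move=> kj; apply/setP => i; rewrite !inE.
by have [->|] := eqVneq i k; rewrite ?kj // andbC.
Qed.

Lemma cardsD1_in A j : j \in A -> #|A :\ j| = #|A|.-1.
Proof. by move=> jA; rewrite (cardsD1 j A) jA. Qed.

Lemma cardsU1_notin A k : k \notin A -> #|k |: A| = #|A|.+1.
Proof. by move=> kA; rewrite cardsU1 kA. Qed.

Lemma card_exchange_setI B Z k j :
  k \notin B -> j \notin Z -> #|((k |: B) :\ j) :&: Z| = ((k \in Z) + #|B :&: Z|)%N.
Proof.
move=> kB jZ; have -> : ((k |: B) :\ j) :&: Z = (k |: B) :&: Z.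
  by apply/setP => i; rewrite !inE; have [->|] := eqVneq i j; rewrite ?(negbTE jZ) ?andbF.
case: (boolP (k \in Z)) => kZ.
  by rewrite setIUl (setIidPl _) ?sub1set // cardsU1 inE (negbTE kB).
rewrite add0n; apply: eq_card => i; rewrite !inE.
by have [->|] := eqVneq i k; rewrite ?(negbTE kB) ?(negbTE kZ) ?andbF.
Qed.

Lemma setDU1D1 A B j b : j \in A -> ((j |: B) :\ b) :\: A = (B :\: A) :\ b.
Proof.
move=> jA; apply/setP => i; rewrite !inE.
by have [->|] := eqVneq i j; rewrite ?jA ?andbF //= andbA [(_ \notin A) && _]andbC -andbA.
Qed.

Lemma setDD1U1 A B j b : j \notin B -> B :\: ((b |: A) :\ j) = (B :\: A) :\ b.
Proof.
move=> jB; apply/setP => i; rewrite !inE.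
have [->|ij] := eqVneq i j; first by rewrite (negbTE jB) !andbF.
by rewrite negb_or andbA.
Qed.

Lemma setD_card0_eq A B : #|B :\: A| = 0%N -> #|A| = #|B| -> B = A.
Proof.
move=> /eqP; rewrite cards_eq0 setD_eq0 => sBA szAB.
by apply/eqP; rewrite eqEcard sBA szAB leqnn.
Qed.

Lemma sum_exchange (R : realType) (F : E -> R) B k j :
  j \in B -> k \notin B ->
  \sum_(i in (k |: B) :\ j) F i = \sum_(i in B) F i + F k - F j.
Proof.
move=> jB kB; have kj : k != j by apply: contraNneq kB => ->.
rewrite -setU1D1 // big_setU1 /= ?(big_setD1 j jB) /=; first lra.
by rewrite !inE negb_and kB orbT.
Qed.

End SetExchange.

Definition cocircuit (R : realType) (E : finType) (p : {set E} -> trop R)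
  (S : {set E}) : E -> trop R := fun i => p (i |: S).

Section PluckerVector.
Variables (R : realType) (E : finType) (r : nat) (p : {set E} -> trop R).
Hypothesis p_plucker : plucker r p.
Implicit Types (S T : {set E}) (i j : E).

Lemma plucker_card S : p S <> None -> #|S| = r.
Proof. by case: p_plucker => _ + _; apply. Qed.

Lemma cocircuit_mem S j : #|S| = r.-1 -> j \in S -> cocircuit p S j = None.
Proof.
move=> szS jS; rewrite /cocircuit (setUidPr _) ?sub1set //.
case pS : (p S) => [a|] //; have /plucker_card : p S <> None by rewrite pS.
have : (0 < #|S|)%N by apply/card_gt0P; exists j.
rewrite szS; lia.
Qed.

Lemma dvecE T i : #|T| = r.+1 -> dvec p T i = p (T :\ i).
Proof.
move=> szT; rewrite /dvec; case: ifPn => // iT.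
rewrite (setDidPl _); last by rewrite disjoint_sym disjoints1.
case pT : (p T) => [a|] //; have /plucker_card : p T <> None by rewrite pT.
by rewrite szT; lia.
Qed.

Lemma cocircuit_circuit_orth S T :
  #|S| = r.-1 -> #|T| = r.+1 -> torth (cocircuit p S) (dvec p T).
Proof.
move=> szS szT.
have off k : k \notin T :\: S -> tplus (cocircuit p S k) (p (T :\ k)) = None.
  rewrite inE negb_and negbK => /orP [kS|kT]; first by rewrite cocircuit_mem.
  by rewrite -dvecE // /dvec (negbTE kT); case: (cocircuit p S k).
case: p_plucker => _ _ /(_ S T szS szT) /(min_twice_setT off).
by congr min_twice; apply: functional_extensionality => k; rewrite dvecE.
Qed.

Lemma cocircuit_tls S : #|S| = r.-1 -> tls_of r p (cocircuit p S).
Proof.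
move=> szS c [T [szT [l [cE _]]]].
have -> : c = fun k => tplus (dvec p T k) (Some l) by apply: functional_extensionality.
exact/torth_shift/torthC/cocircuit_circuit_orth.
Qed.

End PluckerVector.

Lemma circuit_orth_tls (R : realType) (E : finType) (r : nat) (p : {set E} -> trop R)
    (T : {set E}) (x : E -> trop R) :
  #|T| = r.+1 -> tls_of r p x -> torth (dvec p T) x.
Proof.
move=> szT Lx; have [/existsP [i /eqP di] | dT0] := boolP [exists i, dvec p T i != None].
  apply/(torth_shift _ _ 0)/Lx; exists T; split=> //; exists 0.
  by split=> [k|]; [rewrite tplus0 | exists i; rewrite tplus0].
apply/torthP => k a b dk; move: dT0; rewrite negb_exists => /forallP /(_ k).
by rewrite dk.
Qed.

Section CocircuitSpan.
Variables (R : realType) (E : finType) (r : nat) (p : {set E} -> trop R).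
Variable x : E -> trop R.
Hypothesis p_plucker : plucker r p.
Hypothesis x_perp_circuits : forall T : {set E}, #|T| = r.+1 -> torth (dvec p T) x.
Implicit Types (B S : {set E}).

Let zeros := [set i | x i == None].
Let weight B : R := odflt 0 (p B) - \sum_(i in B) odflt 0 (x i).
Let zmax := (\max_(B | p B != None) #|B :&: zeros|)%N.
Let admissible B := (p B != None) && (#|B :&: zeros| == zmax).
Let optimal B := admissible B /\ forall B', admissible B' -> weight B <= weight B'.

Lemma zmax_ge B : p B != None -> (#|B :&: zeros| <= zmax)%N.
Proof. by move=> pB; rewrite /zmax (bigop.leq_bigmax_cond B pB). Qed.

Lemma exists_optimal : exists B, optimal B.
Proof.
case: p_plucker => [[S0 /eqP pS0] _ _].
have adm : admissible [arg max_(B > S0 | p B != None) #|B :&: zeros|].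
  by rewrite /admissible /zmax (bigop.bigmax_eq_arg S0) // eqxx andbT; case: arg_maxnP.
by case: (arg_minP weight adm) => B admB Bmin; exists B.
Qed.

Lemma optimal_exchange B k a :
  optimal B -> k \notin B -> x k = Some a -> exists B', optimal B' /\ k \in B'.
Proof.
move=> [admB Bmin] kB xk; have /andP [pB0 /eqP zB] := admB.
case pB : (p B) pB0 => [v|] // _.
have szT : #|k |: B| = r.+1 by rewrite cardsU1_notin // (plucker_card p_plucker) ?pB.
have dk : dvec p (k |: B) k = Some v by rewrite /dvec setU11 setU1K.
have [j [d [e [jk dj xj le_de]]]] := (torthP _ _).1 (x_perp_circuits szT) k v a dk xk.
move: dj; rewrite /dvec; case: ifPn => // /setU1P [/eqP|jB]; first by rewrite (negbTE jk).
move=> pB'; exists ((k |: B) :\ j); split; last by rewrite !inE eq_sym jk eqxx.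
have admB' : admissible ((k |: B) :\ j).
  by rewrite /admissible pB' card_exchange_setI ?inE ?xj ?xk //= zB.
split=> // B'' /Bmin; apply: le_trans.
by rewrite /weight pB pB' sum_exchange // xj xk /=; lra.
Qed.

Lemma exists_optimal_mem k a : x k = Some a -> exists B, optimal B /\ k \in B.
Proof.
move=> xk; have [B optB] := exists_optimal.
by case: (boolP (k \in B)) => kB; [exists B | exact: optimal_exchange optB kB xk].
Qed.

(* Among the bases with the most zeros of x, one minimizing p B - sum_B x contains
   k; exchanging k against the partner j offered by a cocircuit would either add
   a zero of x or decrease that weight, unless x k + y k is shared. *)
Lemma tls_orth_cocircuit_perp y :
  (forall S, #|S| = r.-1 -> torth (cocircuit p S) y) -> torth x y.
Proof.
move=> y_perp; apply/torthP => k a b xk yk; apply: NNPP => no_other.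
have [B [[admB Bmin] kB]] := exists_optimal_mem xk.
have /andP [pB0 /eqP zB] := admB; case pB : (p B) pB0 => [v|] // _.
have szB : #|B| = r by apply: (plucker_card p_plucker); rewrite pB.
have szS : #|B :\ k| = r.-1 by rewrite cardsD1_in // szB.
have ck : cocircuit p (B :\ k) k = Some v by rewrite /cocircuit setD1K.
have [j [d [e [jk cj yj le_de]]]] := (torthP _ _).1 (y_perp _ szS) k v b ck yk.
have jB : j \notin B.
  by apply/negP => jB; move: cj; rewrite (cocircuit_mem p_plucker) // !inE jk.
move: cj; rewrite /cocircuit setU1D1 // => pB'.
case xj : (x j) => [c|].
- have admB' : admissible ((j |: B) :\ k).
    by rewrite /admissible pB' card_exchange_setI ?inE ?xj ?xk //= zB.
  have := Bmin _ admB'; rewrite /weight pB pB' sum_exchange // xj xk /= => le_w.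
  by apply: no_other; exists j, c, e; split=> //; lra.
- have := @zmax_ge ((j |: B) :\ k).
  by rewrite pB' card_exchange_setI ?inE ?xj ?xk //= zB ltnn => /(_ isT).
Qed.
End CocircuitSpan.

Section CircuitsDetermineVector.
Variables (R : realType) (E : finType) (r : nat) (p q : {set E} -> trop R).
Hypothesis p_plucker : plucker r p.
Hypothesis q_card : forall {U : {set E}}, q U <> None -> #|U| = r.
Hypothesis q_nonzero : exists U, q U <> None.
Hypothesis cocircuit_p_perp_circuit_q : forall S T : {set E},
  #|S| = r.-1 -> #|T| = r.+1 -> torth (cocircuit p S) (dvec q T).
Implicit Types (A B S T U : {set E}).

Lemma exchange_partner (f : {set E} -> trop R) A B b :
  torth (cocircuit p (B :\ b)) (dvec f (b |: A)) -> b \in B -> b \notin A ->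
  p B <> None -> f A <> None ->
  exists j, [/\ j \in A, j \notin B, p ((j |: B) :\ b) <> None & f ((b |: A) :\ j) <> None].
Proof.
move=> orth bB bA; case pB : (p B) => [u|] // _; case fA : (f A) => [w|] // _.
have szS : #|B :\ b| = r.-1 by rewrite cardsD1_in // (plucker_card p_plucker) ?pB.
have cb : cocircuit p (B :\ b) b = Some u by rewrite /cocircuit setD1K.
have db : dvec f (b |: A) b = Some w by rewrite /dvec setU11 setU1K.
have [j [u' [w' [jb cj dj _]]]] := (torthP _ _).1 orth b u w cb db.
move: dj; rewrite /dvec; case: ifPn => // /setU1P [/eqP|jA]; first by rewrite (negbTE jb).
have jB : j \notin B.
  by apply/negP => jB; move: cj; rewrite (cocircuit_mem p_plucker) // !inE jb.
move=> fj; exists j; split=> //; last by rewrite fj.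
by move: cj; rewrite /cocircuit setU1D1 // => ->.
Qed.

Lemma q_support_sub A B : q A <> None -> p B <> None -> p A <> None.
Proof.
move Hk : #|B :\: A| => k; elim: k A B Hk => [|k IH] A B szBA qA pB.
  by rewrite -(setD_card0_eq szBA) // (q_card qA) (plucker_card p_plucker pB).
have [b] : exists b, b \in B :\: A by apply/card_gt0P; rewrite szBA.
rewrite inE => /andP [bA bB].
have szS : #|B :\ b| = r.-1 by rewrite cardsD1_in // (plucker_card p_plucker pB).
have szT : #|b |: A| = r.+1 by rewrite cardsU1_notin // (q_card qA).
have [j [jA jB pB' _]] := exchange_partner (cocircuit_p_perp_circuit_q szS szT) bB bA pB qA.
apply: (IH A ((j |: B) :\ b)) => //.
by move: szBA; rewrite setDU1D1 // (cardsD1 b (B :\: A)) inE bA bB; lia.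
Qed.

(* Only the coordinates b and j of the orthogonal pair below are finite. *)
Lemma q_exchange_shift A b j pa qa c :
  b \notin A -> j \in A -> p A = Some pa -> q A = Some qa ->
  p ((b |: A) :\ j) = Some c -> q ((b |: A) :\ j) = Some (c + (qa - pa)).
Proof.
move=> bA jA pA qA pA'.
have bj : b != j by apply: contraNneq bA => ->.
have szA : #|A| = r by apply: (plucker_card p_plucker); rewrite pA.
have szS : #|A :\ j| = r.-1 by rewrite cardsD1_in // szA.
have szT : #|b |: A| = r.+1 by rewrite cardsU1_notin // szA.
have off k : k != b -> k != j -> tplus (cocircuit p (A :\ j) k) (dvec q (b |: A) k) = None.
  move=> kb kj; rewrite /dvec; case: ifPn => [/setU1P [/eqP|kA] | _]; first by rewrite (negbTE kb).
    by rewrite (cocircuit_mem p_plucker) // !inE kj.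
  by case: (cocircuit p _ k).
have := torth_pair (cocircuit_p_perp_circuit_q szS szT) bj off.
rewrite /cocircuit /dvec setU11 setU1K // setU1D1 // pA' qA setD1K // pA.
rewrite (setU1r b jA); case: (q _) => [w|] /(_ _ erefl) // [eq_w].
by congr Some; lra.
Qed.

Lemma q_shift_p A B pa qa :
  p A = Some pa -> q A = Some qa -> p B <> None -> q B = tplus (p B) (Some (qa - pa)).
Proof.
move Hk : #|B :\: A| => k; elim: k A B pa qa Hk => [|k IH] A B pa qa szBA pA qA pB.
  have szA : #|A| = r by apply: (plucker_card p_plucker); rewrite pA.
  rewrite (setD_card0_eq szBA) ?szA ?(plucker_card p_plucker pB) // pA qA /=.
  by congr Some; lra.
have [b] : exists b, b \in B :\: A by apply/card_gt0P; rewrite szBA.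
rewrite inE => /andP [bA bB].
have szA : #|A| = r by apply: (plucker_card p_plucker); rewrite pA.
have szS : #|B :\ b| = r.-1 by rewrite cardsD1_in // (plucker_card p_plucker pB).
have szT : #|b |: A| = r.+1 by rewrite cardsU1_notin // szA.
have pA0 : p A <> None by rewrite pA.
have [j [jA jB _]] := exchange_partner (cocircuit_circuit_orth p_plucker szS szT) bB bA pB pA0.
case pA' : (p _) => [c|] // _.
rewrite (IH ((b |: A) :\ j) B c (c + (qa - pa))) //; first by congr tplus; congr Some; lra.
  by move: szBA; rewrite setDD1U1 // (cardsD1 b (B :\: A)) inE bA bB; lia.
exact: q_exchange_shift pA qA pA'.
Qed.

Lemma cocircuit_perp_shift : exists l, forall U, q U = tplus (p U) (Some l).
Proof.
have [A qA] := q_nonzero; case: p_plucker => [[B pB] _ _].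
have := q_support_sub qA pB.
case pA : (p A) => [pa|] // _; case qA' : (q A) qA => [qa|] // _.
exists (qa - pa) => U; case pU : (p U) => [u|].
  by rewrite (q_shift_p pA qA') ?pU.
case qU : (q U) => [w|] //.
by exfalso; apply: (@q_support_sub U A); rewrite ?qU ?pU ?pA.
Qed.

End CircuitsDetermineVector.

Section Reflection.
Variable n : nat.
Implicit Types (T : {set J n}) (i : J n).

Lemma jstarK : involutive (@jstar n). Proof. by case. Qed.

Lemma J_gt0 i : (0 < n)%N.
Proof. by case: i => k; apply: leq_ltn_trans (ltn_ord k). Qed.

Lemma card_J : #|J n| = (n + n)%N.
Proof. by rewrite card_sum card_ord. Qed.

Lemma mem_setstar T i : (i \in setstar T) = (jstar i \in T).
Proof.
apply/imsetP/idP => [[k kT ->] | iT]; first by rewrite jstarK.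
by exists (jstar i); rewrite ?jstarK.
Qed.

Lemma setstarK : involutive (@setstar n).
Proof. by move=> T; apply/setP => i; rewrite !mem_setstar jstarK. Qed.

Lemma setstarC T : setstar (~: T) = ~: setstar T.
Proof. by apply/setP => i; rewrite !(mem_setstar, inE). Qed.

Lemma card_setstar T : #|setstar T| = #|T|.
Proof. exact/card_imset/inv_inj/jstarK. Qed.

Lemma card_setCstar T : #|~: setstar T| = (n + n - #|T|)%N.
Proof. by rewrite cardsCs setCK card_setstar card_J. Qed.

End Reflection.

Lemma reflect_vecK (R : realType) (n : nat) : involutive (@reflect_vec R n).
Proof.
by move=> x; apply: functional_extensionality => i; rewrite /reflect_vec jstarK.
Qed.

Lemma torth_reflect (R : realType) (n : nat) (x y : J n -> trop R) :
  torth (reflect_vec x) (reflect_vec y) <-> torth x y.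
Proof.
split; last exact: torth_perm (@jstarK n).
by move=> /(torth_perm (@jstarK n)); congr torth; exact: reflect_vecK.
Qed.

Definition dualstar (R : realType) (n : nat) (p : {set J n} -> trop R) (U : {set J n}) :
  trop R := p (~: setstar U).

Definition star_selfdual (R : realType) (n : nat) (p : {set J n} -> trop R) : Prop :=
  forall T : {set J n}, #|T| = n -> p (~: T) = p (setstar T).

Section Duality.
Variables (R : realType) (n : nat) (p : {set J n} -> trop R).
Hypothesis p_plucker : plucker n p.
Implicit Types (S T U : {set J n}).

Lemma dualstar_card U : dualstar p U <> None -> #|U| = n.
Proof.
move=> /(plucker_card p_plucker); rewrite card_setCstar.
have : (#|U| <= n + n)%N by rewrite -card_J max_card.
lia.
Qed.

Lemma reflect_cocircuit S i :
  #|S| = n.-1 -> reflect_vec (cocircuit p S) i = dvec (dualstar p) (~: setstar S) i.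
Proof.
move=> szS; rewrite /reflect_vec /dvec inE mem_setstar.
case: ifPn => [iS | /negPn iS]; last exact: (cocircuit_mem p_plucker).
rewrite /cocircuit /dualstar; congr p; apply/setP => k.
by rewrite !(inE, mem_setstar) negb_and !negbK jstarK (inv_eq (@jstarK n)).
Qed.

Lemma dualstar_selfdual U : star_selfdual p -> #|U| = n -> dualstar p U = p U.
Proof. by move=> sd szU; rewrite /dualstar sd ?card_setstar // setstarK. Qed.

Lemma reflect_cocircuit_selfdual S :
  star_selfdual p -> #|S| = n.-1 -> reflect_vec (cocircuit p S) = dvec p (~: setstar S).
Proof.
move=> sd szS; apply: functional_extensionality => i.
rewrite reflect_cocircuit // /dvec; case: ifP => // iT.
have n_gt0 := J_gt0 i.
by rewrite dualstar_selfdual // cardsD1_in // card_setCstar szS; lia.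
Qed.

Lemma selfdual_of_isotropic_cocircuits :
  (forall S S', #|S| = n.-1 -> #|S'| = n.-1 ->
     torth (cocircuit p S) (reflect_vec (cocircuit p S'))) ->
  star_selfdual p.
Proof.
move=> iso.
have perp S T : #|S| = n.-1 -> #|T| = n.+1 -> torth (cocircuit p S) (dvec (dualstar p) T).
  move=> szS szT; have szS' : #|~: setstar T| = n.-1 by rewrite card_setCstar szT; lia.
  have := iso S _ szS szS'; congr torth; apply: functional_extensionality => i.
  by rewrite reflect_cocircuit // setstarC setCK setstarK.
case: (p_plucker) => [[B pB] _ _].
have dual_nonzero : exists U, dualstar p U <> None.
  by exists (setstar (~: B)); rewrite /dualstar setstarK setCK.
have [l shift] := cocircuit_perp_shift p_plucker dualstar_card dual_nonzero perp.
(* evaluate the shift at the basis B and at setstar (~: B) *)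
have l0 : l = 0.
  case pB' : (p B) pB => [b|] // _; have := shift (setstar (~: B)).
  rewrite /dualstar setstarK setCK pB' setstarC -/(dualstar p B) shift pB' /=.
  by case=> bE; lra.
by move=> T szT; have := shift (setstar T); rewrite l0 tplus0 /dualstar setstarK.
Qed.

End Duality.

Section IsotropicalCharacterization.
Variables (R : realType) (n : nat) (L : (J n -> trop R) -> Prop) (p : {set J n} -> trop R).
Hypothesis p_plucker : plucker n p.
Hypothesis L_tls : seteq L (tls_of n p).
Implicit Types (S T : {set J n}).

Lemma cocircuit_in_L S : #|S| = n.-1 -> L (cocircuit p S).
Proof. by move=> szS; apply/L_tls/cocircuit_tls. Qed.

Lemma circuit_perp_L T x : #|T| = n.+1 -> L x -> torth (dvec p T) x.
Proof. by move=> szT /L_tls; apply: circuit_orth_tls. Qed.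

Lemma isotropical_of_perp_reflect : seteq (tperp L) (reflect_set L) -> isotropical L.
Proof.
move=> perpL; split; first by exists p.
by move=> x y Lx Ly; apply: (perpL (reflect_vec y)).2 Lx; exists y.
Qed.

Lemma selfdual_of_isotropical : isotropical L -> star_selfdual p.
Proof.
move=> [_ iso]; apply: (selfdual_of_isotropic_cocircuits p_plucker) => S S' szS szS'.
exact: iso (cocircuit_in_L szS) (cocircuit_in_L szS').
Qed.

Lemma selfdual_of_perp_reflect : seteq (tperp L) (reflect_set L) -> star_selfdual p.
Proof. by move=> /isotropical_of_perp_reflect; apply: selfdual_of_isotropical. Qed.

Lemma perp_reflect_of_selfdual : star_selfdual p -> seteq (tperp L) (reflect_set L).
Proof.
move=> sd y; split=> [y_perp | [x [Lx ->]] z Lz].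
  exists (reflect_vec y); split; last by rewrite reflect_vecK.
  apply/L_tls => c [T [szT [l [cE _]]]].
  have -> : c = fun k => tplus (dvec p T k) (Some l) by apply: functional_extensionality.
  have szS : #|~: setstar T| = n.-1 by rewrite card_setCstar szT; lia.
  have := reflect_cocircuit_selfdual p_plucker sd szS; rewrite setstarC setCK setstarK.
  move=> <-; apply/torth_shift/torth_reflect/y_perp/cocircuit_in_L.
  by rewrite card_setCstar szT; lia.
apply: (tls_orth_cocircuit_perp p_plucker) => [T szT | S szS]; first exact: circuit_perp_L.
have [n0 | n_gt0] := posnP n; first by apply: torth_card0; rewrite card_J n0.
have szT : #|~: setstar S| = n.+1 by rewrite card_setCstar szS; lia.
rewrite -[cocircuit p S]reflect_vecK reflect_cocircuit_selfdual //.
exact/torth_reflect/circuit_perp_L.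
Qed.

End IsotropicalCharacterization.

Theorem theorem7p3 (R : realType) (n : nat) (L : (J n -> trop R) -> Prop)
    (p : {set J n} -> trop R) :
  plucker n p -> seteq L (tls_of n p) ->
  (isotropical L <-> seteq (tperp L) (reflect_set L)) /\
  (seteq (tperp L) (reflect_set L) <->
     forall T : {set J n}, #|T| = n -> p (~: T) = p (setstar T)).
Proof.
move=> p_plucker L_tls.
have selfdual_perp := perp_reflect_of_selfdual p_plucker L_tls.
split; split.
- by move=> /(selfdual_of_isotropical p_plucker L_tls) /selfdual_perp.
- exact: isotropical_of_perp_reflect p_plucker L_tls.
- exact: selfdual_of_perp_reflect p_plucker L_tls.
- exact: selfdual_perp.
Qed.
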